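(* Let $B$ be a finite set of closed, bounded line segments in $\mathbb{R}^2$, let $B_i$ be one of its connected components, and let $p\in\mathbb{R}^2$. Then every point of $\mathbb{R}^2\setminus (L_p(B_i)\cup B_i)$ is a clear point with respect to $B_i$, i.e., through every such point there passes a line that does not intersect $B_i$.
   Context: The connected components of $B$ are the connected components of the union of its segments; each $B_i$ is a union of segments of $B$, and $\mathrm{Conv}(B_i)$ denotes its convex hull. For a point $p\in\mathbb{R}^2$, the set $L_p(B_i)\subseteq\mathbb{R}^2$ is defined by: (1) if $B_i$ is a single line segment and $p$ is collinear with it, $L_p(B_i)=\emptyset$; (2) otherwise, if $p$ is a vertex of $\mathrm{Conv}(B_i)$, $L_p(B_i)$ is the closed double wedge bounded by the lines supporting the two edges of $\mathrm{Conv}(B_i)$ meeting at $p$ (the double wedge containing $\mathrm{Conv}(B_i)$); (3) otherwise, if $p$ lies in $\mathrm{Conv}(B_i)$ (interior or boundary), $L_p(B_i)=\mathbb{R}^2$; (4) otherwise, $L_p(B_i)$ is the closed double wedge bounded by the two tangent lines from $p$ to $\mathrm{Conv}(B_i)$ (the double wedge containing $\mathrm{Conv}(B_i)$). A point is blocked with respect to a set of segments $S$ if every line through it meets $S$, and clear otherwise. *)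

From HB Require Import structures.
From mathcomp Require Import all_boot all_order all_algebra.
From mathcomp Require Import all_classical all_reals all_analysis.
Set Implicit Arguments. Unset Strict Implicit. Unset Printing Implicit Defensive.
Import Order.TTheory GRing.Theory Num.Theory.
Import numFieldNormedType.Exports.
Local Open Scope classical_set_scope.
Local Open Scope ring_scope.

Section Geom.
Variable R : realType.
Local Notation pt := (R * R)%type.

Definition det2 (u v : pt) : R := u.1 * v.2 - u.2 * v.1.
Definition vsub (x y : pt) : pt := (x.1 - y.1, x.2 - y.2).
Definition vaxpy (p : pt) (t : R) (d : pt) : pt := (p.1 + t * d.1, p.2 + t * d.2).

Definition seg (a b : pt) : set pt :=
  [set z | exists2 t : R, 0 <= t <= 1 & z = vaxpy a t (vsub b a)].

Definition segs_union (B : seq (pt * pt)) : set pt :=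
  [set z | exists2 s, s \in B & seg s.1 s.2 z].

Definition convex_set (C : set pt) : Prop :=
  forall x y t, C x -> C y -> 0 <= t <= 1 -> C (vaxpy x t (vsub y x)).
Definition conv (S : set pt) : set pt :=
  [set z | forall C, convex_set C -> S `<=` C -> C z].

Definition is_vertex (C : set pt) (p : pt) : Prop :=
  C p /\ ~ (exists x y t, [/\ C x, C y, x <> y, 0 < t < 1 & p = vaxpy x t (vsub y x)]).

Definition single_seg_collinear (S : set pt) (p : pt) : Prop :=
  exists a b, S = seg a b /\ det2 (vsub b a) (vsub p a) = 0.

(* d is the (nonzero) direction of a line through p that supports C
   (C lies in one closed half-plane of it) and touches C at a point other
   than p: for p a vertex of a polygon C these are the lines supporting the
   two edges at p; for p outside C these are the two tangent lines from p. *)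
Definition supp_dir (C : set pt) (p d : pt) : Prop :=
  [/\ d <> (0, 0),
      (forall x, C x -> 0 <= det2 d (vsub x p)) \/
      (forall x, C x -> det2 d (vsub x p) <= 0)
    & exists x, [/\ C x, x <> p & det2 d (vsub x p) = 0]].

(* closed double wedge with apex p bounded by the lines p + R u, p + R v
   (the pair of opposite sectors {p + a u + b v | a b >= 0}) *)
Definition dwedge (p u v : pt) : set pt :=
  [set z | exists a b : R, 0 <= a * b /\
      z = (p.1 + a * u.1 + b * v.1, p.2 + a * u.2 + b * v.2)].

(* the double wedge bounded by the two supporting lines through p,
   namely the one of the two double wedges that contains C *)
Definition wedge_of (C : set pt) (p : pt) : set pt :=
  [set z | exists u v, [/\ supp_dir C p u, supp_dir C p v, det2 u v != 0,
                          C `<=` dwedge p u v & dwedge p u v z]].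

Definition Lp (p : pt) (Bi : set pt) : set pt :=
  [set z |
     (single_seg_collinear Bi p /\ False)
  \/ (~ single_seg_collinear Bi p /\ is_vertex (conv Bi) p /\ wedge_of (conv Bi) p z)
  \/ (~ single_seg_collinear Bi p /\ ~ is_vertex (conv Bi) p /\ conv Bi p)
  \/ (~ single_seg_collinear Bi p /\ ~ is_vertex (conv Bi) p /\ ~ conv Bi p
       /\ wedge_of (conv Bi) p z)].

Definition clear_pt (S : set pt) (q : pt) : Prop :=
  exists2 d : pt, d <> (0, 0) & forall t : R, ~ S (vaxpy q t d).

Definition component_of (B : seq (pt * pt)) (Bi : set pt) : Prop :=
  exists2 x, segs_union B x & Bi = connected_component (segs_union B) x.
End Geom.

From Pilot Require Import Defs.
From HB Require Import structures.
From mathcomp Require Import all_boot all_order all_algebra.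
From mathcomp Require Import all_classical all_reals all_analysis.
From mathcomp Require Import ring lra.
Set Implicit Arguments. Unset Strict Implicit. Unset Printing Implicit Defensive.
Import numFieldNormedType.Exports.
Import Order.TTheory GRing.Theory Num.Theory.
Local Open Scope classical_set_scope.
Local Open Scope ring_scope.

(* A component is a finite union of segments, so its convex hull is the hull
   of a finite set E of endpoints.  Around any point o the plane splits E three
   ways (a discrete Farkas lemma, proved by adding the points of E one at a
   time): o is an inner point of hull E, or E lies in a convex angle at o whose
   edges pass through two points of E, or E lies on a line through o.
   At q this shows that q is in the hull: otherwise a line through q parallel
   to the two edges' chord, or perpendicular to the line carrying E, misses B_i.
   At p, the first case makes L_p(B_i) the whole plane and the second exhibits
   L_p(B_i) as the double wedge cut out by the two edges, which contains the
   hull and hence q.  In the third case, as when B_i is a segment collinear with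
   p, both B_i and q lie on one line and the perpendicular through q is clear. *)

Section Planar.
Variable R : realType.
Local Notation pt := (R * R)%type.

Definition orient (o x y : pt) : R := det2 (vsub x o) (vsub y o).
Definition dotc (o x y : pt) : R :=
  (vsub x o).1 * (vsub y o).1 + (vsub x o).2 * (vsub y o).2.

Definition balanced (o e1 e2 e3 : pt) (a1 a2 a3 : R) : Prop :=
  a1 * (vsub e1 o).1 + a2 * (vsub e2 o).1 + a3 * (vsub e3 o).1 = 0 /\
  a1 * (vsub e1 o).2 + a2 * (vsub e2 o).2 + a3 * (vsub e3 o).2 = 0.

Definition line (m o : pt) : set pt := [set z | det2 m (vsub z o) = 0].
Definition hull (E : seq pt) : set pt := Defs.conv [set` E].
Definition inner_pt (C : set pt) (o : pt) : Prop :=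
  exists x y t, [/\ C x, C y, x <> y, 0 < t < 1 & o = vaxpy x t (vsub y x)].

Definition seg_affine (f : pt -> R) : Prop :=
  forall x y t, f (vaxpy x t (vsub y x)) = (1 - t) * f x + t * f y.

Lemma pt_eq (x y : pt) : x.1 = y.1 -> x.2 = y.2 -> x = y.
Proof. by case: x y => ? ? [? ?] /= -> ->. Qed.

Lemma sumsq_gt0 (m : pt) : m <> (0, 0) -> 0 < m.1 * m.1 + m.2 * m.2.
Proof.
case: m => a b /= m0; rewrite -!expr2 lt_neqAle addr_ge0 ?sqr_ge0 // andbT.
rewrite eq_sym paddr_eq0 ?sqr_ge0 // !sqrf_eq0.
by apply/negP => /andP[/eqP a0 /eqP b0]; apply: m0; rewrite a0 b0.
Qed.

Lemma vsub_eq0 (x o : pt) : vsub x o = (0, 0) -> x = o.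
Proof. by case=> /eqP + /eqP; rewrite !subr_eq0 => /eqP h1 /eqP h2; apply: pt_eq. Qed.

Lemma dotc_gt0 (o u : pt) : u <> o -> 0 < dotc o u u.
Proof. by move=> uo; apply: sumsq_gt0 => /vsub_eq0. Qed.

Lemma dotc_ge0 (o u : pt) : 0 <= dotc o u u.
Proof. by rewrite /dotc -!expr2 addr_ge0 ?sqr_ge0. Qed.

Lemma dotc_apex_r (o x : pt) : dotc o x o = 0.
Proof. by rewrite /dotc /vsub /= !subrr !mulr0 addr0. Qed.

Lemma orient_self (o x : pt) : orient o x x = 0.
Proof. by rewrite /orient /det2 mulrC subrr. Qed.

Lemma orient_apex_l (o x : pt) : orient o o x = 0.
Proof. by rewrite /orient /det2 /vsub /= !subrr !mul0r subrr. Qed.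

Lemma orient_apex_r (o x : pt) : orient o x o = 0.
Proof. by rewrite /orient /det2 /vsub /= !subrr !mulr0 subrr. Qed.

Lemma orient_swap (o x y : pt) : orient o x y = - orient o y x.
Proof. by rewrite /orient /det2; ring. Qed.

Lemma orient_cramer (o u v w : pt) :
  balanced o w u v (orient o u v) (- orient o w v) (- orient o u w).
Proof. by rewrite /balanced /orient /det2 /vsub /=; split; ring. Qed.

Lemma orient_eq0_apex (o u v e : pt) : orient o u v != 0 ->
  orient o u e = 0 -> orient o e v = 0 -> e = o.
Proof.
move=> uv ue ev; have [] := orient_cramer o u v e; rewrite ue ev !oppr0 !mul0r !addr0.
by move=> /eqP + /eqP; rewrite !mulf_eq0 (negbTE uv) !subr_eq0 => /eqP h1 /eqP h2; apply: pt_eq.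
Qed.

Lemma seg_affine_det2 (m o : pt) : seg_affine (fun z => det2 m (vsub z o)).
Proof. by move=> x y t; rewrite /det2 /vsub /vaxpy /=; ring. Qed.

Lemma seg_affine_orient_l (o v : pt) : seg_affine (orient o ^~ v).
Proof. by move=> x y t; rewrite /orient /det2 /vsub /vaxpy /=; ring. Qed.

Lemma seg_affineD (f g : pt -> R) :
  seg_affine f -> seg_affine g -> seg_affine (fun z => f z + g z).
Proof. by move=> hf hg x y t; rewrite hf hg; ring. Qed.

Lemma convex_ge0 (f : pt -> R) : seg_affine f -> Defs.convex_set [set z | 0 <= f z].
Proof. by move=> hf x y t /= fx fy /andP[t0 t1]; rewrite hf; nra. Qed.

Lemma convex_gt0 (f : pt -> R) : seg_affine f -> Defs.convex_set [set z | 0 < f z].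
Proof.
move=> hf x y t /= fx fy /andP[t0 t1]; rewrite hf.
by have [t1'|t1'] := ltP t 1; [nra | have -> : t = 1 by lra]; lra.
Qed.

Lemma convex_line (m o : pt) : Defs.convex_set (line m o).
Proof. by move=> x y t; rewrite /line /= => hx hy _; rewrite seg_affine_det2 hx hy; ring. Qed.

Lemma convexI (A B : set pt) :
  Defs.convex_set A -> Defs.convex_set B -> Defs.convex_set (A `&` B).
Proof. by move=> hA hB x y t [? ?] [? ?] ht; split; [exact: hA | exact: hB]. Qed.

Lemma conv_convex (S : set pt) : Defs.convex_set (Defs.conv S).
Proof. by move=> x y t hx hy ht C hC SC; apply: hC (hx C hC SC) (hy C hC SC) ht. Qed.

Lemma subset_conv (S : set pt) : S `<=` Defs.conv S.
Proof. by move=> z Sz C _; apply. Qed.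

Lemma conv_min (S C : set pt) : Defs.convex_set C -> S `<=` C -> Defs.conv S `<=` C.
Proof. by move=> hC SC z; apply. Qed.

Lemma conv_mono (A B : set pt) : A `<=` B -> Defs.conv A `<=` Defs.conv B.
Proof. by move=> AB; apply: conv_min => [|z /AB]; [exact: conv_convex | exact: subset_conv]. Qed.

Lemma inner_pt_not_vertex (C : set pt) (o : pt) : inner_pt C o -> ~ is_vertex C o.
Proof. by move=> io [_]. Qed.

Lemma inner_pt_mem (C : set pt) (o : pt) : Defs.convex_set C -> inner_pt C o -> C o.
Proof.
by move=> hC [x [y [t [Cx Cy _ /andP[t0 t1] ->]]]]; apply: hC; rewrite ?ltW.
Qed.

Lemma inner_pt_sub (A B : set pt) (o : pt) : A `<=` B -> inner_pt A o -> inner_pt B o.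
Proof. by move=> AB [x [y [t [Ax Ay]]]]; exists x, y, t; split; auto. Qed.

Lemma inner_pt_balanced (C : set pt) (o e1 e2 e3 : pt) (a1 a2 a3 : R) :
  Defs.convex_set C -> C e1 -> C e2 -> C e3 -> e1 <> o ->
  0 < a1 -> 0 <= a2 -> 0 <= a3 -> balanced o e1 e2 e3 a1 a2 a3 -> inner_pt C o.
Proof.
move=> hC Ce1 Ce2 Ce3 e1o a1_gt0 a2_ge0 a3_ge0 [c1 c2].
set S := a2 + a3; set A := a1 + S.
have S_gt0 : 0 < S.
  rewrite lt_neqAle addr_ge0 // andbT eq_sym paddr_eq0 //.
  apply/negP => /andP[/eqP a20 /eqP a30]; apply: e1o; apply: vsub_eq0.
  move: c1 c2; rewrite a20 a30 !mul0r !addr0 => /eqP + /eqP.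
  by rewrite !mulf_eq0 (gt_eqF a1_gt0) => /eqP h1 /eqP h2; apply: pt_eq.
have A_gt0 : 0 < A by rewrite /A; lra.
(* [o] divides the segment from [e1] to [y] in the ratio [S : a1] *)
set y := vaxpy e2 (a3 / S) (vsub e3 e2).
have ho : o = vaxpy e1 (S / A) (vsub y e1).
  have nS : S != 0 by rewrite gt_eqF.
  have nA : A != 0 by rewrite gt_eqF.
  have o1 : o.1 = (a1 * e1.1 + a2 * e2.1 + a3 * e3.1) / A.
    by apply: (mulIf nA); rewrite mulfVK //; move: c1; rewrite /vsub /= /A /S; nra.
  have o2 : o.2 = (a1 * e1.2 + a2 * e2.2 + a3 * e3.2) / A.
    by apply: (mulIf nA); rewrite mulfVK //; move: c2; rewrite /vsub /= /A /S; nra.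
  by apply: pt_eq; rewrite /y /vaxpy /vsub /= ?o1 ?o2 /A /S; field;
    rewrite -/S -/A nS nA.
exists e1, y, (S / A); split => //.
- rewrite /y; apply: hC => //.
  by rewrite divr_ge0 ?(ltW S_gt0) //= ler_pdivrMr // mul1r /S; lra.
- by move=> e1y; apply: e1o; rewrite ho -e1y; apply: pt_eq; rewrite /vaxpy /vsub /=; ring.
- by rewrite divr_gt0 //= ltr_pdivrMr // mul1r /A; lra.
Qed.

Lemma convex_hull (E : seq pt) : Defs.convex_set (hull E).
Proof. exact: conv_convex. Qed.

Lemma mem_hull (E : seq pt) (e : pt) : e \in E -> hull E e.
Proof. exact: subset_conv. Qed.

Lemma hull_min (E : seq pt) (C : set pt) :
  Defs.convex_set C -> (forall e, e \in E -> C e) -> hull E `<=` C.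
Proof. exact: conv_min. Qed.

Lemma inner_pt_hull (E : seq pt) (o e1 e2 e3 : pt) (a1 a2 a3 : R) :
  e1 \in E -> e2 \in E -> e3 \in E -> e1 <> o ->
  0 < a1 -> 0 <= a2 -> 0 <= a3 -> balanced o e1 e2 e3 a1 a2 a3 -> inner_pt (hull E) o.
Proof.
by move=> /mem_hull e1E /mem_hull e2E /mem_hull e3E; apply: inner_pt_balanced (@convex_hull E) e1E e2E e3E.
Qed.

Lemma inner_pt_hull_cons (E : seq pt) (w o : pt) :
  inner_pt (hull E) o -> inner_pt (hull (w :: E)) o.
Proof.
apply: inner_pt_sub; apply: conv_mono => e /= eE.
by rewrite in_cons eE orbT.
Qed.

Definition wedge_at (o : pt) (E : seq pt) (u v : pt) : Prop :=
  [/\ u \in E, v \in E, 0 < orient o u v &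
      forall e, e \in E -> 0 <= orient o u e /\ 0 <= orient o e v].

Definition ray_at (o : pt) (E : seq pt) (u : pt) : Prop :=
  [/\ u \in E, u <> o & forall e, e \in E -> orient o u e = 0 /\ 0 <= dotc o u e].

Lemma wedge_at_cons (o : pt) (E : seq pt) (u v w : pt) : wedge_at o E u v ->
  inner_pt (hull (w :: E)) o \/ exists u' v', wedge_at o (w :: E) u' v'.
Proof.
move=> [uE vE uv_gt0 wedgeE].
have plucker x y : orient o x y * orient o u v =
    orient o x v * orient o u y - orient o u x * orient o y v.
  by rewrite /orient /det2 /vsub /=; ring.
have uE' : u \in w :: E by rewrite in_cons uE orbT.
have vE' : v \in w :: E by rewrite in_cons vE orbT.
have [/andP[uw wv]|] := boolP ((0 <= orient o u w) && (0 <= orient o w v)).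
  by right; exists u, v; split => // e; rewrite in_cons => /predU1P[->|/wedgeE].
rewrite negb_and !leNgt !negbK => uw_wv.
have [uw|uw] := ltP 0 (orient o u w).
  have wv : orient o w v < 0 by case/orP: uw_wv => // ?; lra.
  right; exists u, w; split; rewrite ?mem_head //.
  move=> e; rewrite in_cons => /predU1P[->|/wedgeE [ue ev]].
    by rewrite orient_self (ltW uw).
  by split=> //; have := plucker e w; nra.
have [wv|wv] := ltP 0 (orient o w v).
  have {}uw : orient o u w < 0 by case/orP: uw_wv => // ?; lra.
  right; exists w, v; split; rewrite ?mem_head //.
  move=> e; rewrite in_cons => /predU1P[->|/wedgeE [ue ev]].
    by rewrite orient_self (ltW wv).
  by split=> //; have := plucker w e; nra.
left; apply: (inner_pt_hull (mem_head w E) uE' vE' _ uv_gt0 _ _ (orient_cramer o u v w)).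
- by move=> wo; move: uw_wv; rewrite wo orient_apex_r orient_apex_l ltxx.
- by rewrite oppr_ge0.
- by rewrite oppr_ge0.
Qed.

Lemma ray_at_cons (o : pt) (E : seq pt) (u w : pt) : ray_at o E u ->
  [\/ inner_pt (hull (w :: E)) o, exists u' v', wedge_at o (w :: E) u' v'
     | exists u', ray_at o (w :: E) u'].
Proof.
move=> [uE uo rayE].
have lagrange x y : orient o x y * dotc o u u =
    dotc o u x * orient o u y - orient o u x * dotc o u y.
  by rewrite /orient /dotc /det2 /vsub /=; ring.
have uu_gt0 := dotc_gt0 uo.
have uE' : u \in w :: E by rewrite in_cons uE orbT.
have [uw|uw|uw] := ltrgtP (orient o u w) 0.
- apply: Or32; exists w, u; split; rewrite ?mem_head //.
    by have := lagrange w u; rewrite orient_self; nra.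
  move=> e; rewrite in_cons => /predU1P[->|/rayE [ue ue_ge0]].
    by rewrite orient_self; have := lagrange w u; rewrite orient_self; nra.
  by have := lagrange w e; have := lagrange e u; rewrite orient_self ue; nra.
- apply: Or32; exists u, w; split; rewrite ?mem_head //.
  move=> e; rewrite in_cons => /predU1P[->|/rayE [ue ue_ge0]].
    by rewrite orient_self (ltW uw).
  by rewrite ue; have := lagrange e w; rewrite ue; nra.
have [uw_ge0|uw_lt0] := lerP 0 (dotc o u w).
  apply: Or33; exists u; split => // e.
  by rewrite in_cons => /predU1P[->|/rayE].
(* [w] lies on the line of the ray, behind [o] *)
have bal : balanced o w u u (dotc o u u) (- dotc o u w) 0.
  split; [transitivity (- (vsub u o).2 * orient o u w)
         | transitivity ((vsub u o).1 * orient o u w)];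
    first [by rewrite uw mulr0 | by rewrite /orient /dotc /det2 /vsub /=; ring].
apply: Or31; apply: (inner_pt_hull (mem_head w E) uE' uE' _ uu_gt0 _ (lexx 0) bal).
  by move=> wo; move: uw_lt0; rewrite wo dotc_apex_r ltxx.
by rewrite oppr_ge0 ltW.
Qed.

Lemma hull_tetrachotomy (o : pt) (E : seq pt) :
  [\/ inner_pt (hull E) o, exists u v, wedge_at o E u v,
      exists u, ray_at o E u | forall e, e \in E -> e = o].
Proof.
elim: E => [|w E IH]; first by apply: Or44.
case: IH => [inner | [u [v wedge]] | [u ray] | allo].
- by apply: Or41; apply: inner_pt_hull_cons.
- by case: (wedge_at_cons w wedge) => ?; [apply: Or41 | apply: Or42].
- by case: (ray_at_cons w ray) => ?; [apply: Or41 | apply: Or42 | apply: Or43].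
have [wo|wo] := eqVneq w o.
  by apply: Or44 => e; rewrite in_cons => /predU1P[->|/allo].
apply: Or43; exists w; split; rewrite ?mem_head //; first exact/eqP.
move=> e; rewrite in_cons => /predU1P[->|/allo ->]; first by rewrite orient_self dotc_ge0.
by rewrite orient_apex_r dotc_apex_r.
Qed.

Lemma hull_trichotomy (o : pt) (E : seq pt) :
  [\/ inner_pt (hull E) o, exists u v, wedge_at o E u v
     | exists2 m, m <> (0, 0) & hull E `<=` line m o].
Proof.
case: (hull_tetrachotomy o E) => [?|?|[u [_ uo rayE]]|allo]; [exact: Or31 | exact: Or32 | |].
  apply: Or33; exists (vsub u o); first by move/vsub_eq0.
  have Eline e : e \in E -> line (vsub u o) o e by case/rayE.
  exact: hull_min (@convex_line _ _) Eline.
apply: Or33; exists (1, 0); first by case=> /eqP; rewrite oner_eq0.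
have Eline e : e \in E -> line (1, 0) o e.
  by move/allo ->; rewrite /line /= /det2 /vsub /= !subrr !mulr0 subrr.
exact: hull_min (@convex_line _ _) Eline.
Qed.

Lemma vaxpy0 (q d : pt) : vaxpy q 0 d = q.
Proof. by apply: pt_eq; rewrite /vaxpy /= mul0r addr0. Qed.

Lemma clear_halfplane (S : set pt) (d q z0 : pt) : S z0 ->
  (forall z, S z -> 0 < det2 d (vsub z q)) -> clear_pt S q.
Proof.
move=> Sz0 side; exists d.
  by move=> d0; have := side _ Sz0; rewrite d0 /det2 /= !mul0r subrr ltxx.
move=> t /side; have -> : det2 d (vsub (vaxpy q t d) q) = 0.
  by rewrite /det2 /vsub /vaxpy /=; ring.
by rewrite ltxx.
Qed.

(* The perpendicular through [q] meets [line m o] only at [q]. *)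
Lemma clear_line (S : set pt) (m o q : pt) : m <> (0, 0) ->
  S `<=` line m o -> line m o q -> ~ S q -> clear_pt S q.
Proof.
move=> m0 Sline qline nSq; exists (- m.2, m.1).
  by case=> /eqP; rewrite oppr_eq0 => /eqP m2 m1; apply: m0; apply: pt_eq.
move=> t /[dup] Sz /Sline; rewrite /line /=.
have -> : det2 m (vsub (vaxpy q t (- m.2, m.1)) o) =
    det2 m (vsub q o) + t * (m.1 * m.1 + m.2 * m.2).
  by rewrite /det2 /vsub /vaxpy /=; ring.
rewrite qline add0r => /eqP; rewrite mulf_eq0 (gt_eqF (sumsq_gt0 m0)) orbF => /eqP t0.
by move: Sz; rewrite t0 vaxpy0.
Qed.

Lemma clear_or_mem_hull (S : set pt) (E : seq pt) (q : pt) :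
  [set` E] `<=` S -> S `<=` hull E -> ~ S q -> hull E q \/ clear_pt S q.
Proof.
move=> ES Shull nSq.
case: (hull_trichotomy q E) => [inner | [u [v [uE vE uv_gt0 wedgeE]]] | [m m0 Eline]].
- by left; apply: inner_pt_mem (@convex_hull E) inner.
- right; apply: (@clear_halfplane _ (vsub u v) q u (ES _ uE)) => z /Shull.
  have side : seg_affine (fun z => orient q u z + orient q z v).
    exact: seg_affineD (seg_affine_det2 _ _) (seg_affine_orient_l _ _).
  have Epos e : e \in E -> 0 < orient q u e + orient q e v.
    move=> eE; have [ue ev] := wedgeE e eE.
    rewrite lt0r addr_ge0 // andbT paddr_eq0 //; apply/negP => /andP[/eqP ue0 /eqP ev0].
    by apply: nSq; rewrite -(orient_eq0_apex (lt0r_neq0 uv_gt0) ue0 ev0); apply: ES.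
  move=> /(hull_min (convex_gt0 side) Epos) /=.
  by rewrite /orient /det2 /vsub /=; congr (0 < _); ring.
- right; apply: (clear_line m0 (subset_trans Shull Eline) _ nSq).
  by rewrite /line /= /det2 /vsub /= !subrr !mulr0 subrr.
Qed.

Lemma seg_start (a b : pt) : seg a b a.
Proof. by exists 0; rewrite ?lexx ?ler01 ?vaxpy0. Qed.

Lemma seg_end (a b : pt) : seg a b b.
Proof. by exists 1; rewrite ?lexx ?ler01 //; apply: pt_eq; rewrite /vaxpy /vsub /=; ring. Qed.

Lemma seg_sub_line (a b : pt) : exists2 m, m <> (0, 0) & seg a b `<=` line m a.
Proof.
have on_line m : det2 m (vsub b a) = 0 -> seg a b `<=` line m a.
  move=> mba z [t _ ->]; rewrite /line /=.
  have -> : det2 m (vsub (vaxpy a t (vsub b a)) a) = t * det2 m (vsub b a).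
    by rewrite /det2 /vsub /vaxpy /=; ring.
  by rewrite mba mulr0.
have [ba0|ba0] := eqVneq (vsub b a) (0, 0).
  exists (1, 0); first by case=> /eqP; rewrite oner_eq0.
  by apply: on_line; rewrite ba0 /det2 /= !mulr0 subrr.
by exists (vsub b a); [exact/eqP | apply: on_line; rewrite /det2 mulrC subrr].
Qed.

Lemma seg_connected (a b : pt) : connected (seg a b).
Proof.
have -> : seg a b = (fun t : R => vaxpy a t (vsub b a)) @` `[0, 1].
  apply/seteqP; split => z.
    by case=> t t01 ->; exists t => //; rewrite in_itv.
  by case=> t; rewrite /= in_itv => t01 <-; exists t.
apply: connected_continuous_connected; first exact: segment_connected.
apply: continuous_subspaceT => t.
have coord (c d : R) : (fun s : R => c + s * d) @ t --> c + t * d.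
  by apply: cvgD; [exact: cvg_cst | apply: cvgM; [exact: cvg_id | exact: cvg_cst]].
exact: cvg_pair (coord _ _) (coord _ _).
Qed.

Lemma seg_sub_component (B : seq (pt * pt)) (x : pt) (s : pt * pt) (z : pt) :
  s \in B -> seg s.1 s.2 z -> connected_component (segs_union B) x z ->
  seg s.1 s.2 `<=` connected_component (segs_union B) x.
Proof.
move=> sB sz xz; rewrite (same_connected_component xz).
have segU : seg s.1 s.2 `<=` segs_union B by move=> y ys; exists s.
exact: connected_component_max sz segU (@seg_connected _ _).
Qed.

(* A component is the union of the segments whose start point it contains,
   so its convex hull is spanned by their endpoints. *)
Lemma component_hull (B : seq (pt * pt)) (Bi : set pt) : component_of B Bi ->
  exists2 E : seq pt, [set` E] `<=` Bi & Defs.conv Bi = hull E.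
Proof.
case=> x _ ->; set K := connected_component _ x.
pose F := [seq s <- B | `[< K s.1 >]].
pose E := map fst F ++ map snd F.
have endsE s : s \in B -> K s.1 -> s.1 \in E /\ s.2 \in E.
  move=> sB Ks; have sF : s \in F by rewrite mem_filter sB asboolT.
  by rewrite !mem_cat !(map_f _ sF) ?orbT.
have EK : [set` E] `<=` K.
  move=> e /=; rewrite mem_cat => /orP[] /mapP[s]; rewrite mem_filter => /andP[/asboolP Ks sB] ->//.
  exact: seg_sub_component sB (seg_start _ _) Ks _ (seg_end _ _).
have KE : K `<=` hull E.
  move=> z Kz; have [s sB sz] := connected_component_sub Kz.
  have [s1E s2E] := endsE s sB (seg_sub_component sB sz Kz (seg_start _ _)).
  by case: sz => t t01 ->; apply: (@convex_hull E) (mem_hull s1E) (mem_hull s2E) t01.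
exists E => //; apply/seteqP; split; first exact: conv_min (@convex_hull E) KE.
exact: conv_mono EK.
Qed.

Lemma supp_dir_orient (C : set pt) (p u : pt) : C u -> u <> p ->
  (forall z, C z -> 0 <= orient p u z) \/ (forall z, C z -> orient p u z <= 0) ->
  supp_dir C p (vsub u p).
Proof. by move=> Cu up side; split=> //; [move/vsub_eq0 | exists u; rewrite -/(orient _ _ _) orient_self]. Qed.

Lemma dwedge_orient (p u v z : pt) : orient p u v != 0 ->
  0 <= orient p z v * orient p u z -> dwedge p (vsub u p) (vsub v p) z.
Proof.
move=> uv zuv; exists (orient p z v / orient p u v), (orient p u z / orient p u v).
split; first by rewrite mulrACA mulr_ge0 // -expr2 sqr_ge0.
by move: uv; rewrite /orient /det2 /vsub => uv; apply: pt_eq => /=; field.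
Qed.

Lemma sub_wedge_of (C : set pt) (p u v : pt) : C u -> C v -> 0 < orient p u v ->
  (forall z, C z -> 0 <= orient p u z /\ 0 <= orient p z v) -> C `<=` wedge_of C p.
Proof.
move=> Cu Cv uv_gt0 inC; have uv := lt0r_neq0 uv_gt0.
have up : u <> p by move=> up; move: uv; rewrite up orient_apex_l eqxx.
have vp : v <> p by move=> vp; move: uv; rewrite vp orient_apex_r eqxx.
have Cwedge : C `<=` dwedge p (vsub u p) (vsub v p).
  by move=> z /inC [uz zv]; apply: dwedge_orient uv _; rewrite mulr_ge0.
move=> z Cz; exists (vsub u p), (vsub v p); split => //; last exact: Cwedge.
- by apply: supp_dir_orient => //; left => y /inC [].
- apply: supp_dir_orient => //; right => y /inC [_ yv].
  by rewrite orient_swap oppr_le0.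
Qed.

Lemma Lp_intro (p q : pt) (Bi : set pt) : ~ single_seg_collinear Bi p ->
  inner_pt (Defs.conv Bi) p \/ wedge_of (Defs.conv Bi) p q -> Lp p Bi q.
Proof.
move=> ncol [inner|wedge].
  do 2 right; left; split=> //; split; first exact: inner_pt_not_vertex.
  exact: inner_pt_mem (@conv_convex Bi) inner.
have [vert|nvert] := pselect (is_vertex (Defs.conv Bi) p); first by right; left.
have [Cp|nCp] := pselect (Defs.conv Bi p); first by do 2 right; left.
by do 3 right.
Qed.
End Planar.

Theorem lemma3 (R : realType) (B : seq ((R * R)%type * (R * R)%type)) (Bi : set ((R * R)%type)) (p : (R * R)%type) :
  component_of B Bi ->
  forall q : (R * R)%type, ~ Lp p Bi q -> ~ Bi q -> clear_pt Bi q.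
Proof.
move=> comp q nLq nBq.
have [E EBi convE] := component_hull comp.
have BiE : Bi `<=` hull E by rewrite -convE; exact: subset_conv.
have [qE|//] := clear_or_mem_hull EBi BiE nBq.
have [[a [b [Bab _]]]|ncol] := pselect (single_seg_collinear Bi p).
  have [m m0 Bline] := seg_sub_line a b; rewrite -Bab in Bline.
  have qC : Defs.conv Bi q by rewrite convE.
  exact: clear_line m0 Bline (conv_min (@convex_line _ m a) Bline qC) nBq.
case: (hull_trichotomy p E) => [inner | [u [v [uE vE uv wedgeE]]] | [m m0 Eline]].
- by case: nLq; apply: Lp_intro ncol _; left; rewrite convE.
- case: nLq; apply: Lp_intro ncol _; right; rewrite convE.
  apply: (sub_wedge_of (C := hull E) (mem_hull uE) (mem_hull vE) uv _ qE).
  exact: hull_min (convexI (convex_ge0 (seg_affine_det2 _ _))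
                           (convex_ge0 (seg_affine_orient_l _ _))) wedgeE.
- exact: clear_line m0 (subset_trans BiE Eline) (Eline _ qE) nBq.
Qed.
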